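(* Let $s\ge 1$ be an integer and let $T$ be a tree with maximum degree $\Delta(T)\ge 2$. Then $$br_{\Delta}(T;s)\le 2s(\Delta(T)-1).$$
   Context: For graphs $H$ and $G$ and a positive integer $s$, write $H\xrightarrow{s} G$ if every coloring of the edges of $H$ with $s$ colors contains a monochromatic subgraph isomorphic to $G$. The degree bipartite Ramsey number is $br_{\Delta}(G;s)=\min\{\Delta(H): H \text{ is bipartite and } H\xrightarrow{s} G\}$, where $\Delta(H)$ denotes the maximum degree of $H$. *)

From mathcomp Require Import all_boot.
Set Implicit Arguments. Unset Strict Implicit. Unset Printing Implicit Defensive.

Record sgraph := SGraph {
  vert :> finType;
  adj : rel vert;
  adj_sym : symmetric adj;
  adj_irr : irreflexive adj }.
Arguments adj s : clear implicits.

Definition deg (G : sgraph) (v : vert G) : nat := #|[set w : vert G | adj G v w]|.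
Definition maxdeg (G : sgraph) : nat := \max_(v : vert G) deg v.

Definition bipartite (G : sgraph) : Prop :=
  exists f : vert G -> bool, forall u v, adj G u v -> f u != f v.

Definition connected (G : sgraph) : Prop :=
  forall u v : vert G, connect (adj G) u v.
Definition acyclic (G : sgraph) : Prop :=
  forall c : seq (vert G), uniq c -> 3 <= size c -> ~~ cycle (adj G) c.
Definition is_tree (G : sgraph) : Prop := connected G /\ acyclic G.

Definition edge_colouring (H : sgraph) (s : nat) (col : vert H -> vert H -> 'I_s) : Prop :=
  forall u v, adj H u v -> col u v = col v u.

Definition arrows (H : sgraph) (s : nat) (G : sgraph) : Prop :=
  forall col : vert H -> vert H -> 'I_s, edge_colouring col ->
    exists (i : 'I_s) (phi : vert G -> vert H), injective phi /\
      forall u v, adj G u v -> adj H (phi u) (phi v) /\ col (phi u) (phi v) = i.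

(* br_Delta(G; s) <= k, i.e. min{Delta(H) : H bipartite, H -s-> G} <= k,
   unfolded as: some bipartite H with H -s-> G has Delta(H) <= k. *)
Definition br_deg_le (G : sgraph) (s k : nat) : Prop :=
  exists H : sgraph, bipartite H /\ arrows H s G /\ maxdeg H <= k.

From mathcomp Require Import all_boot fingroup perm zify.
Set Implicit Arguments. Unset Strict Implicit. Unset Printing Implicit Defensive.

(* Put D = Delta(T) and k = s (D - 1).  The host graph H is the bipartite
   double cover of a Cayley graph with k generators and no short relations:
   - the k generators act on the finite set of words of length at most g over
     the k letters and their inverses, generator i acting by a permutation
     that prepends i to a reduced word (or cancels a leading i^-1); reduced
     words of length at most g then evaluate to distinct permutations;
   - H has vertices (p, side), p a permutation, joined to (a p, ~~ side) for
     each of the 2k signed generators a; it is bipartite and 2k-regular.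
   Given an s-colouring of H, since H has k |H| = s (D - 1) |H| edges, some
   colour class is not (D - 1)-degenerate: there are a colour c and a nonempty
   vertex set S in which every vertex has at least D neighbours of colour c.
   Finally T, taking g = |T|, embeds greedily into this core: vertices of a
   growing subtree receive reduced words, and a new leaf hanging from u gets
   the word of u extended by a letter leading to a c-neighbour inside S, chosen
   among at least D candidates of which at most deg(u) - 1 <= D - 1 are
   excluded (to keep the word reduced and distinct from the siblings' words). *)

(* A partial injection on a finite type extends to a permutation: the
   complements of its domain and of its image have the same size, and are
   matched up through their enumerations. *)
Lemma extend_perm (X : finType) (D : {pred X}) (f : X -> X) :
  {in D &, injective f} -> {p : {perm X} | {in D, forall x, p x = f x}}.
Proof.
move=> injf; set dom := [set x in D]; set img := f @: dom.
have card_img : #|img| = #|dom|.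
  by apply: card_in_imset => x y; rewrite !inE; apply: injf.
have card_compl : #|~: img| = #|~: dom|.
  by apply/eqP; rewrite -(eqn_add2l #|img|) cardsC {1}card_img cardsC.
pose match_out x := nth x (enum (~: img)) (index x (enum (~: dom))).
have match_out_img x : x \notin D -> match_out x \in ~: img.
  move=> xD; rewrite -mem_enum; apply: mem_nth.
  by rewrite -cardE card_compl cardE index_mem mem_enum !inE.
have match_out_inj : {in [predC D] &, injective match_out}.
  move=> x y xD yD E.
  have [xD' yD'] : x \in enum (~: dom) /\ y \in enum (~: dom).
    by rewrite !mem_enum !inE.
  have ix : index x (enum (~: dom)) < size (enum (~: img)).
    by rewrite -cardE card_compl cardE index_mem.
  have iy : index y (enum (~: dom)) < size (enum (~: img)).
    by rewrite -cardE card_compl cardE index_mem.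
  have Ei : index x (enum (~: dom)) = index y (enum (~: dom)).
    apply/eqP; rewrite -(nth_uniq x ix iy (enum_uniq _)).
    by rewrite /match_out in E; rewrite E (set_nth_default y x iy).
  by rewrite -(nth_index x xD') Ei (set_nth_default y x) ?nth_index ?index_mem.
pose h x := if x \in D then f x else match_out x.
have h_inj : injective h.
  move=> x y; rewrite /h; case: ifP => xD; case: ifP => yD.
  - exact: injf.
  - move=> E; have := match_out_img y (negbT yD).
    by rewrite -E inE imset_f ?inE.
  - move=> E; have := match_out_img x (negbT xD).
    by rewrite E inE imset_f ?inE.
  - by apply: match_out_inj; rewrite inE ?xD ?yD.
by exists (perm h_inj) => x xD; rewrite permE /h xD.
Qed.

(* Signed letters over k generators: (i, true) is the i-th generator and
   (i, false) its inverse.  A word is reduced when no letter is immediately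
   followed by its inverse. *)
Section Words.
Variable k : nat.

Definition letter := ('I_k * bool)%type.
Definition inv_letter (a : letter) : letter := (a.1, ~~ a.2).
Definition reduced (w : seq letter) := sorted (fun a b => b != inv_letter a) w.

Lemma reduced_behead a w : reduced (a :: w) -> reduced w.
Proof. by case: w => //= b w /andP[]. Qed.

Lemma reduced_rcons w a :
  reduced w -> (w = [::]) \/ (a != inv_letter (last a w)) -> reduced (rcons w a).
Proof. by case: w => [|b w] //= rw [//|h]; rewrite /reduced /= rcons_path rw. Qed.

Fixpoint words n : seq (seq letter) :=
  [::] :: (if n is n'.+1 then [seq a :: w | a <- enum {: letter}, w <- words n']
           else [::]).

Lemma mem_words n w : (w \in words n) = (size w <= n).
Proof.
elim: n w => [|n IH] [|a w] //=; rewrite in_cons /=; apply/allpairsP/idP.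
  by case=> -[b u] /= [_]; rewrite IH => su [_ ->].
by move=> sw; exists (a, w) => /=; rewrite ?mem_enum ?IH.
Qed.
End Words.

(* The letters act by permutations on the finite set of words of length at
   most g: the generator i prepends (i, true) to a reduced word, or cancels a
   leading (i, false).  On reduced words this partial map is injective, so it
   extends to a permutation.  Consequently a reduced word of length at most g,
   evaluated as a product of these permutations, sends the empty word to the
   word itself: there are no short relations. *)
Section WordAction.
Variables k g : nat.

Definition short_word := seq_sub (words k g).
Lemma empty_in_words : [::] \in words k g. Proof. by rewrite mem_words. Qed.
Definition empty_word : short_word := SeqSub empty_in_words.

Section Generator.
Variable i : 'I_k.

Definition push_word (w : seq (letter k)) :=
  if ohead w == Some (i, false) then behead w else (i, true) :: w.

(* Reduced words on which push_word stays within length g. *)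
Definition push_dom : {pred short_word} :=
  [pred v | reduced (val v) && ((ohead (val v) == Some (i, false)) || (size (val v) < g))].

Definition push (v : short_word) : short_word := insubd v (push_word (val v)).

Lemma pushE v : v \in push_dom -> val (push v) = push_word (val v).
Proof.
rewrite inE /push /push_word => /andP[_ H]; rewrite insubdK // mem_words.
have := valP v; rewrite /= mem_words => sv.
by case: ifP H => [_ _|_ /= ->//]; case: (val v) sv => //= a w /ltnW.
Qed.

Lemma push_inj : {in push_dom &, injective push}.
Proof.
move=> v1 v2 D1 D2 E; apply: val_inj; move: (f_equal val E).
rewrite !pushE // /push_word; move: D1 D2; rewrite !inE.
case: (val v1) => [|a1 w1]; case: (val v2) => [|a2 w2] //=.
- by move=> _ /andP[r _]; case: ifP => [/eqP[Ea]|//] E1; move: r; rewrite Ea -E1 /= eqxx.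
- by move=> /andP[r _] _; case: ifP => [/eqP[Ea]|//] E1; move: r; rewrite Ea E1 /= eqxx.
move=> /andP[r1 _] /andP[r2 _].
case: ifP=> [/eqP[Ea1]|_]; case: ifP=> [/eqP[Ea2]|_].
- by rewrite Ea1 Ea2 => ->.
- by move=> E1; move: r1; rewrite Ea1 E1 /= eqxx.
- by move=> E1; move: r2; rewrite Ea2 -E1 /= eqxx.
by case=> -> ->.
Qed.

Definition push_perm : {perm short_word} := proj1_sig (extend_perm push_inj).

Lemma push_permE v : v \in push_dom -> push_perm v = push v.
Proof. exact: (proj2_sig (extend_perm push_inj)). Qed.
End Generator.

Definition gen (a : letter k) : {perm short_word} :=
  if a.2 then push_perm a.1 else (push_perm a.1)^-1%g.

Lemma gen_inv_letter a : gen (inv_letter a) = (gen a)^-1%g.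
Proof. by case: a => i [] //=; rewrite /gen invgK. Qed.

(* Evaluation of a word; the first letter acts last, so that prepending a
   letter to a word composes its generator on the left. *)
Fixpoint eval (w : seq (letter k)) : {perm short_word} :=
  if w is a :: w' then (eval w' * gen a)%g else 1%g.

Lemma eval_rcons w a : eval (rcons w a) = (gen a * eval w)%g.
Proof. by elim: w => [|b w IH] /=; rewrite ?mulg1 ?mul1g // IH mulgA. Qed.

Lemma eval_empty_word w : reduced w -> size w <= g -> val (eval w empty_word) = w.
Proof.
elim: w => [|[i b] w IH] /= rw sw; first by rewrite perm1.
have IHw := IH (reduced_behead rw) (ltnW sw).
rewrite permM /gen /=; case: b rw => rw.
- have wD : eval w empty_word \in push_dom i by rewrite inE IHw (reduced_behead rw) sw orbT.
  rewrite push_permE // pushE // /push_word IHw.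
  case: w {IH IHw sw wD} rw => //= b w /andP[hb _].
  by case: ifP => // /eqP[Eb]; move: hb; rewrite Eb eqxx.
- have yw : (i, false) :: w \in words k g by rewrite mem_words.
  have yD : SeqSub yw \in push_dom i by rewrite inE /= rw eqxx.
  have Ey : push_perm i (SeqSub yw) = eval w empty_word.
    by apply: val_inj; rewrite push_permE // pushE // /push_word /= eqxx IHw.
  by rewrite -Ey permK.
Qed.

Lemma eval_inj u v : reduced u -> size u <= g -> reduced v -> size v <= g ->
  eval u = eval v -> u = v.
Proof.
move=> ru su rv sv E.
by rewrite -(eval_empty_word ru su) -(eval_empty_word rv sv) E.
Qed.

Lemma gen_inj : 0 < g -> injective gen.
Proof. by move=> g0 a b E; have [] : [:: a] = [:: b] by apply: eval_inj => //=; rewrite E. Qed.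
End WordAction.

(* The host graph: the bipartite double cover of the Cayley graph of the
   permutations of short words with respect to the 2k signed generators. *)
Section Host.
Variables k g : nat.

Definition host_vert := ({perm short_word k g} * bool)%type.

Definition host_adj (x y : host_vert) :=
  (x.2 != y.2) && [exists a : letter k, y.1 == (gen g a * x.1)%g].

Lemma host_adj_sym : symmetric host_adj.
Proof.
move=> x y; rewrite /host_adj eq_sym; congr (_ && _).
by apply/existsP/existsP => -[a /eqP E]; exists (inv_letter a);
  rewrite gen_inv_letter E mulgA mulVg mul1g.
Qed.

Lemma host_adj_irr : irreflexive host_adj.
Proof. by move=> x; rewrite /host_adj eqxx. Qed.

Definition host : sgraph := SGraph host_adj_sym host_adj_irr.

Definition step_along (a : letter k) (x : host) : host := ((gen g a * x.1)%g, ~~ x.2).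

Lemma host_adj_step a (x : host) : adj host x (step_along a x).
Proof. by rewrite /= /host_adj /=; apply/andP; split; [case: x.2 | apply/existsP; exists a]. Qed.

Lemma host_nbrs (x : host) :
  [set y : host | adj host x y] = [set step_along a x | a : letter k].
Proof.
apply/setP => y; rewrite inE /= /host_adj; apply/idP/imsetP => [/andP[side /existsP[a /eqP E]]|].
  exists a => //; case: y side E => q b /= side ->.
  by rewrite /step_along; case: b (x.2) side => [] [].
by case=> a _ ->; apply: host_adj_step.
Qed.

Lemma host_bipartite : bipartite host.
Proof. by exists (fun x : host => x.2) => u v /andP[]. Qed.

(* As soon as g > 0 the generators are distinct, so the host is 2k-regular. *)
Lemma host_deg (x : host) : 0 < g -> deg x = 2 * k.
Proof.
move=> g0; rewrite /deg host_nbrs card_imset.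
  by rewrite card_prod card_ord card_bool mulnC.
by move=> a b [/mulIg /(gen_inj g0)].
Qed.

Lemma host_maxdeg : 0 < g -> maxdeg host <= 2 * k.
Proof. by move=> g0; apply/bigmax_leqP => x _; rewrite host_deg. Qed.
End Host.

(* Counting in an edge-coloured graph: if every vertex has degree at least
   2 s (D - 1), then some colour class contains a nonempty vertex set S in
   which every vertex has at least D neighbours of that colour.  Otherwise
   each colour class is (D - 1)-degenerate, hence has fewer than
   (D - 1) |H| edges, and the s colour classes cannot cover all edges. *)
Section Colouring.
Variables (H : sgraph) (s : nat) (col : H -> H -> 'I_s).
Hypothesis col_sym : edge_colouring col.

Definition cadj (c : 'I_s) (x y : H) : bool := adj H x y && (col x y == c).

Definition cdeg c (S : {set H}) (x : H) : nat := \sum_(y in S) cadj c x y.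

(* Twice the number of c-coloured edges inside S. *)
Definition cedges c (S : {set H}) : nat := \sum_(x in S) cdeg c S x.

Lemma cadj_sym c x y : cadj c x y = cadj c y x.
Proof. by rewrite /cadj adj_sym; case E: (adj H y x); rewrite //= col_sym // adj_sym. Qed.

Lemma cdegE c S x : cdeg c S x = #|[set y in S | cadj c x y]|.
Proof.
rewrite -sum1_card [LHS]big_mkcond [RHS]big_mkcond /=.
by apply: eq_bigr => y _; rewrite inE; case: (y \in S); case: cadj.
Qed.

Lemma cdeg_le_card c S x : cdeg c S x <= #|S :\ x|.
Proof.
rewrite cdegE; apply: subset_leq_card; apply/subsetP => y.
rewrite !inE => /andP[-> /andP[axy _]]; rewrite andbT.
by apply: contraTneq axy => ->; rewrite adj_irr.
Qed.

Lemma cedgesD1 c (S : {set H}) x :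
  x \in S -> cedges c S = 2 * cdeg c S x + cedges c (S :\ x).
Proof.
move=> xS.
have cdegD1 y : cdeg c S y = cadj c y x + cdeg c (S :\ x) y by rewrite /cdeg (big_setD1 x xS).
have cdeg_x : cdeg c S x = cdeg c (S :\ x) x by rewrite cdegD1 /cadj adj_irr.
rewrite /cedges (big_setD1 x xS) /= cdeg_x mul2n -addnn -addnA; congr (_ + _).
rewrite [X in X + _](_ : _ = \sum_(y in S :\ x) cadj c y x); last first.
  by apply: eq_bigr => y _; rewrite cadj_sym.
by rewrite -big_split; apply: eq_bigr => y _; rewrite cdegD1.
Qed.

Lemma cedges_degenerate D c :
  (forall S : {set H}, S != set0 -> exists2 x, x \in S & cdeg c S x < D) ->
  forall S, cedges c S <= 2 * (D - 1) * (#|S| - 1).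
Proof.
move=> degen S; move Hn : #|S| => n; elim: n S Hn => [|n IH] S Hn.
  by move/eqP: Hn; rewrite cards_eq0 => /eqP ->; rewrite /cedges big_set0.
have [x xS small] : exists2 x, x \in S & cdeg c S x < D.
  by apply: degen; rewrite -card_gt0 Hn.
have Sx : #|S :\ x| = n by move: Hn; rewrite (cardsD1 x S) xS add1n => -[].
have le_n := cdeg_le_card c S x; rewrite Sx in le_n.
have {IH} IHS := IH _ Sx; rewrite (cedgesD1 c xS).
case: n {Hn Sx} le_n IHS => [|n] le_n IHS; first lia.
rewrite !subn1 /= mulnS; lia.
Qed.

(* Every edge carries exactly one colour. *)
Lemma sum_cedges : \sum_(c < s) cedges c [set: H] = \sum_(x : H) deg x.
Proof.
rewrite /cedges exchange_big; apply: eq_big => [x|x _]; first by rewrite in_setT.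
rewrite /cdeg exchange_big /deg -sum1dep_card [RHS]big_mkcond /=.
apply: eq_big => [y|y _]; first by rewrite in_setT.
case axy: (adj H x y); last by apply: big1 => c _; rewrite /cadj axy.
rewrite (bigD1 (col x y)) //= big1 => [|c ncol]; first by rewrite /cadj axy eqxx.
by rewrite /cadj axy eq_sym (negbTE ncol).
Qed.

Lemma monochromatic_core D :
  0 < #|H| -> 0 < s * (D - 1) -> (forall x : H, 2 * s * (D - 1) <= deg x) ->
  exists c : 'I_s, exists2 S : {set H}, S != set0 &
    forall x, x \in S -> D <= cdeg c S x.
Proof.
move=> H0 sD mindeg.
case: (boolP [exists c, [exists S : {set H}, (S != set0) &&
    [forall x in S, D <= cdeg c S x]]]).
  by case/existsP => c /existsP[S /andP[S0 /forall_inP core]]; exists c, S.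
rewrite negb_exists => /forallP no_core; exfalso.
have degen c : forall S : {set H}, S != set0 -> exists2 x, x \in S & cdeg c S x < D.
  move=> S S0; move: (no_core c); rewrite negb_exists => /forallP /(_ S).
  by rewrite S0 /= => /forall_inPn[x xS]; rewrite -ltnNge; exists x.
have upper : \sum_(x : H) deg x <= \sum_(c < s) 2 * (D - 1) * (#|H| - 1).
  rewrite -sum_cedges leq_sum // => c _.
  by rewrite -cardsT; apply: (cedges_degenerate (degen c)).
rewrite sum_nat_const card_ord in upper.
have lower : #|H| * (2 * s * (D - 1)) <= \sum_(x : H) deg x.
  by rewrite -sum_nat_const leq_sum.
move: (leq_trans lower upper) H0 sD; case: #|H| => [|n] //.
rewrite subn1 /=; move: (D - 1) => m; nia.
Qed.
End Colouring.

Section Subtrees.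
Variable T : sgraph.

Definition induced_adj (U : {set T}) := [rel x y : T | [&& x \in U, y \in U & adj T x y]].

Definition connected_in (U : {set T}) :=
  forall x y, x \in U -> y \in U -> connect (induced_adj U) x y.

Lemma path_leaves (U : {set T}) x p : path (adj T) x p -> x \in U -> last x p \notin U ->
  exists u v, [/\ u \in U, v \notin U & adj T u v].
Proof.
elim: p x => [|y p IH] x /=; first by move=> _ ->.
case/andP=> axy pp xU lU; case: (boolP (y \in U)) => yU; first exact: IH pp yU lU.
by exists x, y.
Qed.

Lemma leaving_edge (U : {set T}) x0 : connected T -> x0 \in U -> ~~ ([set: T] \subset U) ->
  exists u v, [/\ u \in U, v \notin U & adj T u v].
Proof.
move=> cT x0U /subsetPn[y _ yU]; case/connectP: (cT x0 y) => p pp ly.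
by apply: (path_leaves pp x0U); rewrite -ly.
Qed.

Lemma induced_path_in (U : {set T}) x p : path (induced_adj U) x p -> all (mem U) p.
Proof. by elim: p x => [|y p IH] x //= /andP[/and3P[_ -> _] /IH]. Qed.

(* A vertex v outside a connected U with two distinct neighbours in U would
   close a cycle through v. *)
Lemma unique_attachment (U : {set T}) v x y : acyclic T -> connected_in U -> v \notin U ->
  x \in U -> y \in U -> adj T v x -> adj T v y -> x = y.
Proof.
move=> acT cU vU xU yU avx avy; apply/eqP/negP => /negP nxy.
case/connectP: (cU x y xU yU) => q pq lyq.
case: (shortenP pq) lyq => p pp uniq_p _ {pq} ly.
have p0 : p != [::] by apply: contraNneq nxy => Ep; rewrite ly Ep.
have vp : v \notin x :: p.
  rewrite in_cons negb_or; apply/andP; split; first by apply: contraNneq vU => ->.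
  by apply: contra vU => /(allP (induced_path_in pp)).
have uniq_c : uniq (v :: x :: p) by rewrite cons_uniq vp uniq_p.
have size_c : 3 <= size (v :: x :: p) by case: (p) p0.
move/negP: (acT _ uniq_c size_c); apply.
rewrite /= avx rcons_path (sub_path _ pp) /=; last by move=> a b /and3P[].
by rewrite -ly adj_sym avy.
Qed.

Lemma connected_in_grow (U : {set T}) u v :
  connected_in U -> u \in U -> adj T u v -> connected_in (v |: U).
Proof.
move=> cU uU auv.
have inside a b : a \in U -> b \in U -> connect (induced_adj (v |: U)) a b.
  move=> aU bU; apply: connect_sub (cU a b aU bU) => c d /and3P[cU' dU' acd].
  by apply: connect1; rewrite /= !inE cU' dU' acd !orbT.
have uv : connect (induced_adj (v |: U)) u v.
  by apply: connect1; rewrite /= !inE eqxx uU auv !orbT.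
have vu : connect (induced_adj (v |: U)) v u.
  by apply: connect1; rewrite /= !inE eqxx uU adj_sym auv !orbT.
move=> a b; rewrite !inE => /orP[/eqP->|aU] /orP[/eqP->|bU].
- exact: connect0.
- exact: connect_trans vu (inside _ _ uU bU).
- exact: connect_trans (inside _ _ aU uU) uv.
- exact: inside.
Qed.
End Subtrees.

Lemma deg_le_maxdeg (G : sgraph) (x : G) : deg x <= maxdeg G.
Proof. by rewrite /maxdeg; apply: (@leq_bigmax _ (@deg G) x). Qed.

(* A
   vertex u of the growing subtree U carries a reduced word w u and is placed
   at (w u) applied to a fixed root of S; the words of adjacent vertices differ
   by one final letter, which keeps track of the tree structure. *)
Section Embedding.
Variables (s : nat) (T : sgraph) (k g : nat).
Variables (col : host k g -> host k g -> 'I_s) (c : 'I_s).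
Variables (S : {set host k g}) (root : host k g).
Hypothesis col_sym : edge_colouring col.
Hypothesis S_core : forall x, x \in S -> maxdeg T <= cdeg col c S x.
Hypothesis root_in_S : root \in S.
Hypothesis T_acyclic : acyclic T.
Hypothesis T_connected : connected T.

Definition place (w : T -> seq (letter k)) (u : T) : host k g :=
  ((eval g (w u) * root.1)%g, odd (size (w u)) (+) root.2).

Lemma place_rcons w w' u v a :
  w' v = rcons (w u) a -> place w' v = step_along a (place w u).
Proof. by move=> E; rewrite /place /step_along E eval_rcons size_rcons /= mulgA addNb. Qed.

Record partial_embedding (U : {set T}) (w : T -> seq (letter k)) : Prop := {
  pe_reduced : forall u, u \in U -> reduced (w u) /\ size (w u) < #|U|;
  pe_core : forall u, u \in U -> place w u \in S;
  pe_edge : forall u v, u \in U -> v \in U -> adj T u v -> cadj col c (place w u) (place w v);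
  pe_inj : {in U &, injective w};
  pe_parent : forall u, u \in U -> w u != [::] ->
    exists2 x, x \in U & adj T u x /\ exists b, w u = rcons (w x) b;
  pe_child : forall u x a, u \in U -> x \in U -> w x = rcons (w u) a -> adj T u x;
  pe_connected : connected_in U }.

Lemma partial_embedding1 x0 : partial_embedding [set x0] (fun _ => [::]).
Proof.
have place_root : place (fun _ => [::]) x0 = root by rewrite /place /= mul1g; case: root.
split.
- by move=> u _; rewrite cards1.
- by move=> u /set1P->; rewrite place_root.
- by move=> u v /set1P-> /set1P->; rewrite adj_irr.
- by move=> u v /set1P-> /set1P->.
- by [].
- by move=> u x a _ _ /(f_equal size); rewrite size_rcons.
- by move=> u v /set1P-> /set1P->; apply: connect0.
Qed.

Definition core_letters (x : host k g) : {set letter k} :=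
  [set a | (step_along a x \in S) && (col x (step_along a x) == c)].

Lemma card_core_letters x : x \in S -> maxdeg T <= #|core_letters x|.
Proof.
move=> xS; apply: (leq_trans (S_core xS)); rewrite cdegE.
apply: (leq_trans _ (leq_imset_card (fun a => step_along a x) (core_letters x))).
apply: subset_leq_card.
apply/subsetP => y; rewrite inE => /andP[yS /andP[axy cxy]].
have : y \in [set y : host k g | adj (host k g) x y] by rewrite inE.
rewrite host_nbrs => /imsetP[a _ Ey]; apply/imsetP; exists a => //.
by rewrite inE -Ey yS cxy.
Qed.

(* Letters that may not extend w u: the one cancelling its last letter, and
   those already used by a child of u. *)
Definition forbidden (U : {set T}) (w : T -> seq (letter k)) (u : T) : {set letter k} :=
  [set a | (w u != [::]) && (a == inv_letter (last a (w u)))] :|: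
  [set a | [exists z in U, w z == rcons (w u) a]].

(* Each forbidden letter points to a distinct neighbour of u inside U, and v
   is a further neighbour of u outside U. *)
Lemma card_forbidden U w u v : partial_embedding U w -> u \in U -> v \notin U ->
  adj T u v -> #|forbidden U w u| < maxdeg T.
Proof.
move=> pe uU vU auv.
pose N := [set z in U | adj T u z].
have card_N : #|N| < deg u.
  have v_nbr : v \in [set z | adj T u z] by rewrite inE.
  rewrite /deg (cardsD1 v [set z | adj T u z]) v_nbr add1n ltnS; apply: subset_leq_card.
  apply/subsetP => z; rewrite !inE => /andP[zU ->]; rewrite andbT.
  by apply: contraTneq zU => ->.
apply: (leq_trans _ (deg_le_maxdeg u)); apply: (leq_ltn_trans _ card_N).
have [->|[a0 _]] := set_0Vmem (forbidden U w u); first by rewrite cards0.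
pose toward z := if size (w u) < size (w z) then last a0 (w z)
                 else inv_letter (last a0 (w u)).
apply: (leq_trans _ (leq_imset_card toward N)); apply: subset_leq_card.
apply/subsetP => a; rewrite !inE => /orP[/andP[ne /eqP Ea]|/existsP[z /andP[zU /eqP Ez]]].
- have [y yU [auy [b Eb]]] := pe_parent pe uU ne.
  apply/imsetP; exists y; first by rewrite inE yU auy.
  by rewrite /toward Eb size_rcons ltnNge leqnSn /= Ea Eb !last_rcons.
- apply/imsetP; exists z; first by rewrite inE zU (pe_child pe uU zU Ez).
  by rewrite /toward Ez size_rcons ltnSn last_rcons.
Qed.

Section Extension.
Variables (U : {set T}) (w : T -> seq (letter k)) (u v : T) (a : letter k).
Hypothesis pe : partial_embedding U w.
Hypotheses (uU : u \in U) (vU : v \notin U) (auv : adj T u v).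
Hypotheses (a_core : a \in core_letters (place w u)) (a_ok : a \notin forbidden U w u).

Definition extend_word (z : T) := if z == v then rcons (w u) a else w z.

Lemma extend_word_new : extend_word v = rcons (w u) a.
Proof. by rewrite /extend_word eqxx. Qed.

Lemma extend_word_old z : z \in U -> extend_word z = w z.
Proof. by move=> zU; rewrite /extend_word; case: eqP => // Ez; move: vU; rewrite -Ez zU. Qed.

Lemma place_old z : z \in U -> place extend_word z = place w z.
Proof. by move=> zU; rewrite /place extend_word_old. Qed.

Lemma place_new : place extend_word v = step_along a (place w u).
Proof. exact: place_rcons extend_word_new. Qed.

Lemma new_word_fresh z : z \in U -> w z <> rcons (w u) a.
Proof.
move=> zU Ez; move: a_ok; rewrite !inE negb_or => /andP[_ /existsP[]].
by exists z; rewrite zU Ez eqxx.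
Qed.

Lemma only_attachment z : z \in U -> adj T v z -> z = u.
Proof.
move=> zU avz; apply: (unique_attachment T_acyclic (pe_connected pe) vU zU uU avz).
by rewrite adj_sym.
Qed.

Lemma new_edge : cadj col c (place w u) (place extend_word v).
Proof.
by move: a_core; rewrite inE place_new /cadj host_adj_step => /andP[].
Qed.

Lemma extend_embedding : partial_embedding (v |: U) extend_word.
Proof.
have card_vU : #|v |: U| = #|U|.+1 by rewrite cardsU1 vU.
split.
- move=> z; rewrite card_vU => /setU1P[->|zU].
    have [ru su] := pe_reduced pe uU.
    rewrite extend_word_new size_rcons ltnS; split=> //; apply: reduced_rcons => //.
    move: a_ok; rewrite !inE negb_or => /andP[+ _]; rewrite negb_and negbK.
    by case/orP=> [/eqP|]; [left | right].
  by rewrite extend_word_old //; case: (pe_reduced pe zU) => -> /ltnW.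
- move=> z /setU1P[->|zU]; last by rewrite place_old ?(pe_core pe).
  by move: a_core; rewrite inE place_new => /andP[].
- move=> z1 z2 /setU1P[->|z1U] /setU1P[->|z2U]; first by rewrite adj_irr.
  + by move=> /(only_attachment z2U) ->; rewrite (place_old uU) (cadj_sym col_sym) new_edge.
  + by rewrite adj_sym => /(only_attachment z1U) ->; rewrite (place_old uU) new_edge.
  + by move=> az; rewrite !place_old //; apply: (pe_edge pe).
- move=> z1 z2 /setU1P[->|z1U] /setU1P[->|z2U] //.
  + by rewrite extend_word_new extend_word_old // => E; case: (new_word_fresh z2U (esym E)).
  + by rewrite extend_word_new extend_word_old // => E; case: (new_word_fresh z1U E).
  + by rewrite !extend_word_old //; apply: (pe_inj pe).
- move=> z /setU1P[->|zU] ne.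
    exists u; first by rewrite !inE uU orbT.
    by split; [rewrite adj_sym | exists a; rewrite extend_word_new extend_word_old].
  rewrite extend_word_old // in ne; have [y yU [azy [b Eb]]] := pe_parent pe zU ne.
  exists y; first by rewrite !inE yU orbT.
  by split=> //; exists b; rewrite !extend_word_old.
- move=> z x b /setU1P[->|zU] /setU1P[->|xU].
  + by move/(f_equal size); rewrite size_rcons => /eqP; rewrite eqn_leq ltnn andbF.
  + rewrite extend_word_new extend_word_old // => Ex.
    have ne : w x != [::] by rewrite Ex; case: (w u).
    have [y yU [_ [b' Eb']]] := pe_parent pe xU ne.
    by move: Ex; rewrite Eb' => /rcons_inj[Ey _]; case: (new_word_fresh yU Ey).
  + rewrite extend_word_new extend_word_old // => /rcons_inj[Eu _].
    by rewrite -(pe_inj pe uU zU Eu).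
  + by rewrite !extend_word_old //; apply: (pe_child pe).
- exact: connected_in_grow (pe_connected pe) uU auv.
Qed.
End Extension.

(* Every proper subtree has a leaf to attach, and some core letter is not
   forbidden, so the embedding grows until it covers T. *)
Lemma grow_embedding (x0 : T) n : n < #|T| ->
  exists (U : {set T}) w, #|U| = n.+1 /\ partial_embedding U w.
Proof.
elim: n => [|n IH] n_lt.
  by exists [set x0], (fun _ => [::]); rewrite cards1; split=> //; apply: partial_embedding1.
have [U [w [card_U pe]]] := IH (ltnW n_lt).
have proper : ~~ ([set: T] \subset U).
  by apply/negP => /subset_leq_card; rewrite cardsT card_U leqNgt n_lt.
have [y yU] : exists y, y \in U by apply/set0Pn; rewrite -card_gt0 card_U.
have [u [v [uU vU auv]]] := leaving_edge T_connected yU proper.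
have few_forbidden := leq_trans (card_forbidden pe uU vU auv) (card_core_letters (pe_core pe uU)).
have /subsetPn[a a_core a_ok] : ~~ (core_letters (place w u) \subset forbidden U w u).
  by apply/negP => /subset_leq_card; rewrite leqNgt few_forbidden.
exists (v |: U), (extend_word w u v a); split; first by rewrite cardsU1 vU card_U.
exact: extend_embedding pe uU vU auv a_core a_ok.
Qed.

(* A tree with at most g vertices embeds into the colour-c core; distinct
   vertices get distinct reduced words of length < g, hence distinct places. *)
Lemma tree_embeds (x0 : T) : #|T| <= g ->
  exists phi : T -> host k g, injective phi /\
    forall u v, adj T u v -> adj (host k g) (phi u) (phi v) /\ col (phi u) (phi v) = c.
Proof.
move=> T_small; have T_pos : 0 < #|T| by apply/card_gt0P; exists x0.
have [U [w [card_U pe]]] : exists (U : {set T}) w, #|U| = #|T|.-1.+1 /\ partial_embedding U w.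
  by apply: (grow_embedding x0); rewrite ltn_predL.
rewrite prednK // in card_U.
have U_full : U = [set: T].
  by apply/eqP; rewrite eqEcard subsetT cardsT card_U leqnn.
have inU z : z \in U by rewrite U_full in_setT.
exists (place w); split; last first.
  by move=> u v auv; have /andP[-> /eqP] := pe_edge pe (inU u) (inU v) auv.
move=> z1 z2 /(f_equal fst) /= /mulIg E; apply: (pe_inj pe (inU z1) (inU z2)).
have [r1 s1] := pe_reduced pe (inU z1); have [r2 s2] := pe_reduced pe (inU z2).
rewrite card_U in s1 s2.
by apply: (eval_inj r1 _ r2 _ E); apply: leq_trans T_small; apply: ltnW.
Qed.
End Embedding.

Theorem theorem2 (s : nat) (T : sgraph) :
  1 <= s -> is_tree T -> 2 <= maxdeg T ->
  br_deg_le T s (2 * s * (maxdeg T - 1)).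
Proof.
move=> s_pos [T_connected T_acyclic] D2; set D := maxdeg T in D2 *.
have [x0 _] : exists x0 : T, true.
  case: (pickP (@predT T)) => [x _|no_vertex]; first by exists x.
  by move: D2; rewrite /D /maxdeg big_pred0.
set k := s * (D - 1); have k_pos : 0 < k by rewrite muln_gt0 s_pos subn_gt0.
have T_pos : 0 < #|T| by apply/card_gt0P; exists x0.
exists (host k #|T|); split; first exact: host_bipartite.
split; last by rewrite -mulnA; apply: host_maxdeg.
move=> col col_sym.
have host_pos : 0 < #|host k #|T| | by apply/card_gt0P; exists (1%g, true).
have host_regular (x : host k #|T|) : 2 * s * (D - 1) <= deg x.
  by rewrite host_deg // mulnA.
have [c [S S0 S_core]] := monochromatic_core col_sym host_pos k_pos host_regular.
case/set0Pn: S0 => root root_in_S.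
have [phi [phi_inj phi_edge]] :=
  tree_embeds col_sym S_core root_in_S T_acyclic T_connected x0 (leqnn _).
by exists c, phi.
Qed.
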